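(* Let $m=2$ and $n>4$. Let $\mathcal{C}$ be the class of all complete acyclic binary tree CP-nets over $n$ variables, over $\mathcal{X}_{swap}$. (1) If $|F^1(x)\cap L|\le n-4$ for every $x\in\mathcal{X}_{swap}$, then $\mathcal{C}$ is learnable with membership queries to a limited oracle. (2) If $|F^1(x)\cap L|\le\lfloor\frac{n-1}{2}\rfloor-2$ for every $x\in\mathcal{X}_{swap}$, then $\mathcal{C}$ is learnable with membership queries to a malicious oracle. In either case, the worst-case number of queries is in $O(n^2+e_{N^*}n\log_2(n))$, where $e_{N^*}$ is the number of edges of the target CP-net $N^*$.
   Context: Variables $V=\{v_1,\dots,v_n\}$ with binary domains. An outcome assigns a value to every variable. A complete CP-net gives each $v_i$ a parent set $Pa(v_i)\subseteq V\setminus\{v_i\}$ and, for each assignment to $Pa(v_i)$, a strict order on $D_{v_i}$; parents are non-dummy. A tree CP-net is acyclic (parent graph with edges $(v_j,v_i)$, $v_j\in Pa(v_i)$, has no cycle) with every $|Pa(v_i)|\le 1$. Improving flip: changing only $v_i$ to the value preferred under the order for context $o[Pa(v_i)]$; $o'\succ o$ iff a nonempty sequence of improving flips leads from $o$ to $o'$. A swap is an ordered pair $x=(x.1,x.2)$ of outcomes differing in exactly one variable $V(x)$; $\mathcal{X}_{swap}$ contains exactly one ordering of each such pair (fixed arbitrarily); the target concept is $c^*(x)=1$ iff $x.1\succ x.2$ under the target $N^*$. $F^1(x)$ is the set of swaps $x'\in\mathcal{X}_{swap}$ with $V(x')=V(x)$ whose outcomes differ from those of $x$ in exactly one variable other than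 $V(x)$. A set $L\subseteq\mathcal{X}_{swap}$ is fixed in advance by an adversary and unknown to the learner. A limited oracle answers $c^*(x)$ for $x\notin L$ and ''I don't know'' for $x\in L$; a malicious oracle answers $c^*(x)$ for $x\notin L$ and $1-c^*(x)$ for $x\in L$; both are persistent. A class is learnable with membership queries to a limited (malicious) oracle if some algorithm exactly identifies every target using a number of queries polynomial in $n$, the target's size (number of CPT statements) and $|L|$. *)

From mathcomp Require Import all_boot.
Set Implicit Arguments. Unset Strict Implicit. Unset Printing Implicit Defensive.

Definition outcome (n : nat) := {ffun 'I_n -> bool}.

Definition flip n (o : outcome n) (i : 'I_n) : outcome n :=
  [ffun j => if j == i then ~~ o j else o j].

(* A (complete, binary) CP-net in which every variable has at most one parent:
   pa i = Some p means Pa(v_i) = {v_p}, pa i = None means Pa(v_i) = {}.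
   cpt i b = preferred value of v_i when its parent has value b
   (for a parentless variable only cpt i false is used). *)
Record cpnet (n : nat) := CPNet {
  pa  : 'I_n -> option 'I_n ;
  cpt : 'I_n -> bool -> bool }.

Definition par_rel n (N : cpnet n) : rel 'I_n := fun j i => pa N i == Some j.

(* tree CP-net: acyclic parent graph, |Pa| <= 1 (built in), non-dummy parents,
   complete (built in: cpt is total). *)
Definition tree_cpnet n (N : cpnet n) : Prop :=
  (forall i j : 'I_n, par_rel N j i -> ~~ connect (par_rel N) i j) /\
  (forall i p : 'I_n, pa N i = Some p -> cpt N i false != cpt N i true).

Definition nedges n (N : cpnet n) : nat := #|[pred i : 'I_n | pa N i != None]|.

Definition pref n (N : cpnet n) (o : outcome n) (i : 'I_n) : bool :=
  match pa N i with Some p => cpt N i (o p) | None => cpt N i false end.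

Definition impflip n (N : cpnet n) : rel (outcome n) := fun o o' =>
  [exists i, (o' == flip o i) && (o' i == pref N o i)].

(* dom N a b  <->  a ≻ b : a nonempty sequence of improving flips leads from b to a *)
Definition dom n (N : cpnet n) (a b : outcome n) : bool :=
  [exists o1, impflip N b o1 && connect (impflip N) o1 a].

(* A swap is encoded by (x.1, V(x)); its second outcome is flip x.1 V(x). *)
Definition swap n := (outcome n * 'I_n)%type.

(* X_swap is given by an orientation: (o,i) \in X_swap iff ori o i; exactly one
   ordering of each pair is chosen. *)
Definition orientation_ok n (ori : outcome n -> 'I_n -> bool) : Prop :=
  forall o i, ori (flip o i) i = ~~ ori o i.

Definition in_Xswap n (ori : outcome n -> 'I_n -> bool) (x : swap n) : bool :=
  ori x.1 x.2.

Definition concept n (N : cpnet n) (x : swap n) : bool := dom N x.1 (flip x.1 x.2).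

Definition F1 n (ori : outcome n -> 'I_n -> bool) (x : swap n) : {set swap n} :=
  [set y : swap n | [&& in_Xswap ori y, y.2 == x.2 &
     #|[pred j : 'I_n | (j != x.2) && (y.1 j != x.1 j)]| == 1]].

(* Learning algorithms with membership queries: decision trees whose inner
   nodes ask a query and branch on the answer (of type A). *)
Inductive alg (n : nat) (A : Type) :=
| Ret of cpnet n
| Ask of swap n & (A -> alg n A).

(* Run an algorithm against a (persistent) oracle; returns the output and the
   number of queries asked. Asking a query outside X_swap is a failure. *)
Fixpoint run n A (ori : outcome n -> 'I_n -> bool) (a : alg n A)
    (orc : swap n -> A) : option (cpnet n * nat) :=
  match a with
  | Ret h => Some (h, 0)
  | Ask x k => if in_Xswap ori x
               then omap (fun p => (p.1, p.2.+1)) (run ori (k (orc x)) orc)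
               else None
  end.

(* limited oracle: "I don't know" (None) on L *)
Definition limited_oracle n (N : cpnet n) (L : {set swap n}) (x : swap n)
  : option bool := if x \in L then None else Some (concept N x).

Definition malicious_oracle n (N : cpnet n) (L : {set swap n}) (x : swap n)
  : bool := if x \in L then ~~ concept N x else concept N x.

Definition learns n A (ori : outcome n -> 'I_n -> bool) (a : alg n A)
    (orc : swap n -> A) (N : cpnet n) (bound : nat) : Prop :=
  exists h q, run ori a orc = Some (h, q) /\ tree_cpnet h /\
    (forall x, in_Xswap ori x -> concept h x = concept N x) /\ q <= bound.

(* In a tree CP-net the improving flips are acyclic (a potential weighting each
   variable by (n+1)^-depth increases along them), so a swap x is in the concept
   iff x.1 gives V(x) its preferred value in the context x.1.  Hence the CPT entry
   of v_i in a context u is the answer to every swap of v_i in a context that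
   agrees with u on the parent of v_i.  Flipping in u each variable j <> i gives
   n-1 such queries; only the one flipping the parent and those in L can mislead,
   and the bound on |F^1(x) :&: L| makes the correct answer win a majority vote.
   Votes in the all-false and all-true contexts give both CPT entries of v_i,
   which differ iff v_i has a parent (parents are non-dummy); then log n more
   votes, in the contexts spelling the t-th binary digit of every index, give
   the digits of the parent.  This takes 2(n-1) queries per variable and
   (n-1) log n more per edge. *)

From mathcomp Require Import all_boot zify.
Set Implicit Arguments. Unset Strict Implicit. Unset Printing Implicit Defensive.

Lemma count_enum_card (T : finType) (P : pred T) : count P (enum T) = #|P|.
Proof. by rewrite -size_filter enumT cardE. Qed.

Lemma low_bits_inj m a b : a < 2 ^ m -> b < 2 ^ m ->
  (forall t, t < m -> odd (a %/ 2 ^ t) = odd (b %/ 2 ^ t)) -> a = b.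
Proof.
elim: m a b => [|m IHm] a b; first by rewrite expn0; case: a => //; case: b.
move=> a_lt b_lt same_bits.
have := same_bits 0 isT; rewrite expn0 !divn1 => same_odd.
have : a %/ 2 = b %/ 2.
  apply: IHm; rewrite ?ltn_divLR -?expnSr // => t lt_tm.
  by rewrite -!divnMA -expnS same_bits.
by move=> same_half; rewrite (divn_eq a 2) (divn_eq b 2) same_half !modn2 same_odd.
Qed.

Lemma flip_same n (o : outcome n) i : flip o i i = ~~ o i.
Proof. by rewrite ffunE eqxx. Qed.

Lemma flip_other n (o : outcome n) i j : j != i -> flip o i j = o j.
Proof. by rewrite ffunE => /negbTE ->. Qed.

Lemma flipK n (o : outcome n) i : flip (flip o i) i = o.
Proof. by apply/ffunP => j; rewrite !ffunE; case: eqP => // ->; rewrite negbK. Qed.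

Definition pref_of_answer n (x : swap n) (c : bool) : bool :=
  if c then x.1 x.2 else ~~ x.1 x.2.

Lemma concept_eq_pref n (h N : cpnet n) :
  (forall o i, pref h o i = pref N o i) -> concept h =1 concept N.
Proof.
move=> same_pref x.
have same_imp : impflip h =2 impflip N.
  by move=> a b; apply: eq_existsb => i; rewrite same_pref.
by apply: eq_existsb => o1; rewrite same_imp (eq_connect same_imp).
Qed.

Section Acyclic.
Variables (n : nat) (N : cpnet n).
Hypothesis treeN : tree_cpnet N.

Lemma pa_neq_self i : pa N i != Some i.
Proof.
by apply/eqP => pai; have := treeN.1 i i (introT eqP pai); rewrite connect0.
Qed.

Lemma pref_flip o i j : pa N i != Some j -> pref N (flip o j) i = pref N o i.
Proof.
rewrite /pref; case: (pa N i) => [p|] // pj.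
by rewrite flip_other //; apply: contra pj => /eqP ->.
Qed.

Lemma pref_flip_self o i : pref N (flip o i) i = pref N o i.
Proof. exact/pref_flip/pa_neq_self. Qed.

Definition ancestors i := [set j | connect (par_rel N) j i].

Lemma ancestors_proper i p : pa N i = Some p -> ancestors p \proper ancestors i.
Proof.
move=> pai; have edge_pi : par_rel N p i by rewrite /par_rel pai.
apply/properP; split.
  by apply/subsetP => j; rewrite !inE => /connect_trans; apply; apply: connect1.
by exists i; rewrite !inE ?connect0 ?treeN.1.
Qed.

(* Weights drop by a factor n+1 from a variable to each child, so the weight
   an improving flip of v gains at v outweighs what it can lose at the children
   of v, the only other variables whose preferred value changes. *)
Definition weight i := n.+1 ^ (n - #|ancestors i|).

Lemma weight_parent i p : pa N i = Some p -> n.+1 * weight i <= weight p.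
Proof.
move=> /ancestors_proper /proper_card lt_ancestors.
have : #|ancestors i| <= n by rewrite -[n in _ <= n]card_ord max_card.
by move=> le_n; rewrite -expnS leq_pexp2l //; lia.
Qed.

Lemma children_weight v :
  \sum_(u | (u != v) && (pa N u == Some v)) weight u < weight v.
Proof.
rewrite -(ltn_pmul2l (ltn0Sn n)) big_distrr /=.
apply: (@leq_ltn_trans (\sum_(u | (u != v) && (pa N u == Some v)) weight v)).
  by apply: leq_sum => u /andP[_ /eqP /weight_parent].
rewrite sum_nat_const ltn_pmul2r ?expn_gt0 //.
by rewrite ltnS -[n in _ <= n]card_ord max_card.
Qed.

Definition potential (o : outcome n) :=
  \sum_v (o v == pref N o v) * weight v.

Lemma potential_impflip o o' : impflip N o o' -> potential o < potential o'.
Proof.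
case/existsP => v /andP[/eqP -> flip_pref].
have unsat_v : (o v == pref N o v) = false.
  by move: flip_pref; rewrite flip_same; case: (o v); case: (pref N o v).
have sat_v : flip o v v == pref N (flip o v) v by rewrite pref_flip_self.
have sat_other u : (u != v) && (pa N u != Some v) ->
    (flip o v u == pref N (flip o v) u) * weight u = (o u == pref N o u) * weight u.
  by case/andP=> uv pu; rewrite flip_other // pref_flip.
rewrite /potential (bigD1 v) // [X in _ < X](bigD1 v) //= unsat_v sat_v.
rewrite (bigID (fun u => pa N u == Some v)) /=.
rewrite [X in _ < _ + X](bigID (fun u => pa N u == Some v)) /= (eq_bigr _ sat_other).
have : \sum_(u | (u != v) && (pa N u == Some v)) (o u == pref N o u) * weight u
       < weight v.
  apply: leq_ltn_trans (children_weight v).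
  by apply: leq_sum => u _; rewrite -[X in _ <= X]mul1n leq_mul2r leq_b1 orbT.
by move=> lt_children; rewrite mul0n add0n mul1n addnA ltn_add2r ltn_addr.
Qed.

Lemma potential_connect o o' : connect (impflip N) o o' -> potential o <= potential o'.
Proof.
case/connectP => p path_p ->{o'}.
elim: p o path_p => [|o1 p IHp] o //= /andP[oo1 path_p].
exact: leq_trans (ltnW (potential_impflip oo1)) (IHp _ path_p).
Qed.

Lemma conceptE x : concept N x = (x.1 x.2 == pref N x.1 x.2).
Proof.
case: x => o i; rewrite /concept /dom /=.
have flip_imp : o i != pref N o i -> impflip N o (flip o i).
  move=> ne; apply/existsP; exists i; rewrite eqxx flip_same /=.
  by move: ne; case: (o i); case: (pref N o i).
case: eqP => [sat|/eqP unsat].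
  apply/existsP; exists o; rewrite connect0 andbT.
  by apply/existsP; exists i; rewrite flipK eqxx pref_flip_self /= -sat.
apply/negbTE/negP => /existsP[o1 /andP[imp1 conn1]].
have back := leq_trans (potential_impflip imp1) (potential_connect conn1).
by have := ltn_trans back (potential_impflip (flip_imp unsat)); rewrite ltnn.
Qed.

Lemma pref_of_concept x : pref_of_answer x (concept N x) = pref N x.1 x.2.
Proof. by rewrite conceptE /pref_of_answer; case: (x.1 x.2); case: pref. Qed.

End Acyclic.

Section Programs.
Variables (n : nat) (A : Type).

(* Algorithms are written in continuation-passing style: a [prog X] asks some
   queries, computes an [X] and hands it to the rest of the algorithm. *)
Definition prog X := (X -> alg n A) -> alg n A.

Definition ret X (x : X) : prog X := fun k => k x.

Definition bind X Y (p : prog X) (f : X -> prog Y) : prog Y :=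
  fun k => p (fun x => f x k).

Definition ask (x : swap n) : prog A := Ask x.

Fixpoint traverse T X (f : T -> prog X) (s : seq T) : prog (seq X) :=
  if s is t :: s' then
    bind (f t) (fun x => bind (traverse f s') (fun xs => ret (x :: xs)))
  else ret [::].

Definition shift (q : nat) (r : option (cpnet n * nat)) :=
  omap (fun hq => (hq.1, hq.2 + q)) r.

Lemma shift0 r : shift 0 r = r.
Proof. by case: r => [[]|] //= h q; rewrite addn0. Qed.

Lemma shift_shift q1 q2 r : shift q1 (shift q2 r) = shift (q1 + q2) r.
Proof. by case: r => [[]|] //= h q; rewrite -addnA [q2 + _]addnC. Qed.

Variables (ori : outcome n -> 'I_n -> bool) (orc : swap n -> A).

Definition runs X (p : prog X) (x : X) (q : nat) :=
  forall k, run ori (p k) orc = shift q (run ori (k x) orc).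

Lemma runs_ret X (x : X) : runs (ret x) x 0.
Proof. by move=> k; rewrite shift0. Qed.

Lemma runs_bind X Y (p : prog X) (f : X -> prog Y) x y q1 q2 :
  runs p x q1 -> runs (f x) y q2 -> runs (bind p f) y (q1 + q2).
Proof. by move=> px fy k; rewrite /bind px fy shift_shift. Qed.

Lemma runs_ask x : in_Xswap ori x -> runs (ask x) (orc x) 1.
Proof.
by move=> xX k /=; rewrite xX; case: run => [[h q]|] //=; rewrite addn1.
Qed.

Lemma runs_traverse T X (f : T -> prog X) (g : T -> X) (c : T -> nat) s :
  (forall t, runs (f t) (g t) (c t)) ->
  runs (traverse f s) (map g s) (\sum_(t <- s) c t).
Proof.
move=> fg; elim: s => [|t s IHs]; first by rewrite big_nil; apply: runs_ret.
rewrite big_cons -[X in runs _ _ X]addn0 -addnA.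
apply: runs_bind (fg t) _.
exact: (@runs_bind _ _ _ (fun xs => ret (g t :: xs)) _ _ _ _ IHs (runs_ret _)).
Qed.

End Programs.

Arguments runs_ret {n A ori orc X} x.
Arguments runs_ask {n A ori orc x}.
Arguments runs_traverse {n A ori orc T X f g c} s.

Section Learner.
Variables (n : nat) (A : Type) (ori : outcome n -> 'I_n -> bool)
  (interp : A -> option bool).

Local Notation prog := (prog n A).

Definition swap_at i (w : outcome n) : swap n :=
  if ori w i then (w, i) else (flip w i, i).

Definition others (i : 'I_n) := [seq j <- enum 'I_n | j != i].

Definition majority (vs : seq (option bool)) :=
  count (pred1 (Some false)) vs < count (pred1 (Some true)) vs.

Definition vote_of (x : swap n) (a : A) := omap (pref_of_answer x) (interp a).

Definition ask_vote x : prog (option bool) :=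
  bind (ask x) (fun a => ret (vote_of x a)).

Definition vote i u : prog bool :=
  bind (traverse (fun j => ask_vote (swap_at i (flip u j))) (others i))
       (fun vs => ret (majority vs)).

Definition const_ctx b : outcome n := [ffun => b].
Definition bit_ctx t : outcome n := [ffun j : 'I_n => odd (j %/ 2 ^ t)].
Definition nbits := up_log 2 n.

Definition parent_of_bits (b1 : bool) (bits : seq bool) : option 'I_n :=
  [pick j : 'I_n | [forall t : 'I_nbits, odd (j %/ 2 ^ t) == (nth false bits t == b1)]].

Definition row := (option 'I_n * bool * bool)%type.

Definition learn_var i : prog row :=
  bind (vote i (const_ctx false)) (fun b0 =>
  bind (vote i (const_ctx true)) (fun b1 =>
  if b0 == b1 then ret (None, b0, b1) else
  bind (traverse (fun t => vote i (bit_ctx t)) (iota 0 nbits)) (fun bits =>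
  ret (parent_of_bits b1 bits, b0, b1)))).

Definition net_of_rows (r : 'I_n -> row) : cpnet n :=
  CPNet (fun i => (r i).1.1) (fun i b => if b then (r i).2 else (r i).1.2).

Definition learner : alg n A :=
  traverse learn_var (enum 'I_n)
    (fun rs => @Ret n A (net_of_rows (fun i => nth (None, false, false) rs i))).

End Learner.

Arguments const_ctx {n} b.
Arguments bit_ctx {n} t.
Arguments parent_of_bits {n} b1 bits.

Section SwapAt.
Variables (n : nat) (ori : outcome n -> 'I_n -> bool).
Local Notation swap_at := (swap_at ori).

Lemma swap_at_in : orientation_ok ori -> forall i w, in_Xswap ori (swap_at i w).
Proof.
move=> ori_ok i w; rewrite /swap_at; case: ifP => //= not_w.
by rewrite /in_Xswap ori_ok not_w.
Qed.

Lemma swap_at2 i w : (swap_at i w).2 = i.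
Proof. by rewrite /swap_at; case: ifP. Qed.

Lemma swap_at1 i w k : k != i -> (swap_at i w).1 k = w k.
Proof. by rewrite /swap_at; case: ifP => //= _ /flip_other. Qed.

End SwapAt.

Section Correctness.
Variables (n : nat) (A : Type) (ori : outcome n -> 'I_n -> bool)
  (interp : A -> option bool) (orc : swap n -> A) (N : cpnet n).
Hypotheses (ori_ok : orientation_ok ori) (treeN : tree_cpnet N).

Local Notation runs := (runs ori orc).
Local Notation swap_at := (swap_at ori).

Definition votes i u :=
  [seq vote_of interp (swap_at i (flip u j)) (orc (swap_at i (flip u j))) | j <- others i].

Hypothesis majority_votes : forall i u, majority (votes i u) = pref N u i.

Lemma size_others (i : 'I_n) : size (others i) = n.-1.
Proof. by rewrite size_filter count_enum_card cardC1 card_ord. Qed.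

Lemma runs_vote i u : runs (vote ori interp i u) (pref N u i) n.-1.
Proof.
rewrite -majority_votes -[n.-1]addn0 -(size_others i) -sum1_size.
apply: runs_bind; last exact: runs_ret.
apply: runs_traverse => j.
rewrite -[1]addn0; apply: runs_bind; last exact: runs_ret.
exact: runs_ask (swap_at_in ori_ok _ _).
Qed.

Definition learned_row i : row n :=
  (pa N i, pref N (const_ctx false) i, pref N (const_ctx true) i).

Lemma parent_of_bitsE i p : pa N i = Some p ->
  parent_of_bits (cpt N i true) [seq pref N (bit_ctx t) i | t <- iota 0 (nbits n)]
  = Some p.
Proof.
move=> pai; have nondummy := treeN.2 i p pai.
have bitE t : t < nbits n ->
    (nth false [seq pref N (bit_ctx t) i | t <- iota 0 (nbits n)] t == cpt N i true)
    = odd (p %/ 2 ^ t).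
  move=> lt_t; rewrite (nth_map 0) ?size_iota // nth_iota // /pref pai ffunE.
  by case: odd; rewrite ?eqxx // (negbTE nondummy).
have fits (j : 'I_n) : j < 2 ^ nbits n by apply: leq_trans (ltn_ord j) (up_logP _ _).
rewrite /parent_of_bits; case: pickP => [j /forallP bits_j | no_parent].
  congr Some; apply/val_inj/(low_bits_inj (fits j) (fits p)) => t lt_t.
  by rewrite -bitE //; apply/eqP: (bits_j (Ordinal lt_t)).
by have /forallP[] := negbT (no_parent p) => t; rewrite bitE.
Qed.

Definition var_cost i := n.-1 + n.-1 + (if pa N i is Some _ then nbits n * n.-1 else 0).

Lemma runs_learn_var i : runs (learn_var ori interp i) (learned_row i) (var_cost i).
Proof.
rewrite /learn_var /var_cost -addnA.
apply: runs_bind (runs_vote _ _) _; apply: runs_bind (runs_vote _ _) _.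
rewrite /learned_row /pref; case pai: (pa N i) => [p|]; last first.
  by rewrite eqxx; apply: runs_ret.
rewrite !ffunE (negbTE (treeN.2 i p pai)).
have cost_bits : \sum_(t <- iota 0 (nbits n)) n.-1 + 0 = nbits n * n.-1.
  by rewrite addn0 big_const_seq count_predT size_iota iter_addn_0 mulnC.
rewrite -cost_bits -(parent_of_bitsE pai).
apply: runs_bind; last exact: runs_ret.
exact: runs_traverse _ (fun t => runs_vote i (bit_ctx t)).
Qed.

Lemma pref_net_of_rows r : (forall i, r i = learned_row i) ->
  forall o i, pref (net_of_rows r) o i = pref N o i.
Proof.
move=> rE o i; rewrite {1}/pref /= rE /learned_row /pref /=.
by case: (pa N i) => [p|] //; rewrite !ffunE; case: (o p).
Qed.

Lemma tree_net_of_rows r : (forall i, r i = learned_row i) ->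
  tree_cpnet (net_of_rows r).
Proof.
move=> rE; have paE i : pa (net_of_rows r) i = pa N i by rewrite /= rE.
have relE : par_rel (net_of_rows r) =2 par_rel N by move=> j i; rewrite /par_rel paE.
split=> [i j | i p]; first by rewrite relE (eq_connect relE); apply: treeN.1.
rewrite paE /= rE /learned_row /pref => pai; rewrite pai !ffunE.
exact: treeN.2 pai.
Qed.

Lemma sum_var_cost_le :
  \sum_(i <- enum 'I_n) var_cost i <= 2 * (n ^ 2 + nedges N * n * nbits n).
Proof.
rewrite big_enum /=.
apply: (@leq_trans (\sum_i (2 * n + (pa N i != None) * (nbits n * n)))).
  apply: leq_sum => i _; rewrite /var_cost; apply: leq_add; first by lia.
  by case: (pa N i) => //= _; rewrite mul1n leq_mul2l leq_pred orbT.
rewrite big_split /= sum_nat_const card_ord -big_distrl /=.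
have -> : \sum_i (pa N i != None) = nedges N.
  rewrite /nedges -sum1_card [RHS]big_mkcond /=; apply: eq_bigr => i _.
  by rewrite inE; case: (pa N i).
lia.
Qed.

Theorem learner_learns :
  learns ori (learner ori interp) orc N (2 * (n ^ 2 + nedges N * n * nbits n)).
Proof.
set rows := nth (None, false, false) (map learned_row (enum 'I_n)).
have rowsE (i : 'I_n) : rows i = learned_row i.
  by rewrite /rows (nth_map i) ?size_enum_ord // nth_ord_enum.
exists (net_of_rows rows), (\sum_(i <- enum 'I_n) var_cost i).
rewrite /learner (runs_traverse _ runs_learn_var) /= add0n.
split=> //; split; first exact: tree_net_of_rows.
by split; [move=> x _; apply/concept_eq_pref/pref_net_of_rows | apply: sum_var_cost_le].
Qed.

End Correctness.

Lemma majority_eq b vs :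
  count (pred1 (Some (~~ b))) vs < count (pred1 (Some b)) vs -> majority vs = b.
Proof. by case: b => //= wrong_lt; rewrite /majority ltnNge ltnW. Qed.

Lemma count_parent n (N : cpnet n) i :
  count (fun j => pa N i == Some j) (others i) <= 1.
Proof.
case: (pa N i) => [p|]; last by rewrite (@eq_count _ _ pred0) ?count_pred0.
rewrite (@eq_count _ _ (pred1 p)) => [|j /=]; last by rewrite eq_sym.
by rewrite count_uniq_mem ?leq_b1 // filter_uniq ?enum_uniq.
Qed.

Section Robustness.
Variables (n : nat) (ori : outcome n -> 'I_n -> bool) (N : cpnet n)
  (L : {set swap n}).
Hypotheses (ori_ok : orientation_ok ori) (treeN : tree_cpnet N).
Variables (A : Type) (interp : A -> option bool) (orc : swap n -> A).
Hypothesis orc_honest : forall x, x \notin L -> interp (orc x) = Some (concept N x).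

Local Notation swap_at := (swap_at ori).
Local Notation votes := (votes ori interp orc).

Lemma pref_swap_at i w : pref N (swap_at i w).1 i = pref N w i.
Proof. by rewrite /swap_at; case: ifP => //= _; rewrite pref_flip_self. Qed.

Lemma vote_honest i u j : pa N i != Some j -> swap_at i (flip u j) \notin L ->
  vote_of interp (swap_at i (flip u j)) (orc (swap_at i (flip u j)))
  = Some (pref N u i).
Proof.
move=> not_parent notL; rewrite /vote_of orc_honest //=.
by rewrite pref_of_concept // swap_at2 pref_swap_at pref_flip.
Qed.

Definition unreliable i u j := (pa N i == Some j) || (swap_at i (flip u j) \in L).

Lemma card_neighbours_in_L i u :
  #|[pred j | (j != i) && (swap_at i (flip u j) \in L)]|
  <= #|F1 ori (swap_at i u) :&: L|.
Proof.
set D := [pred j | _].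
have inj_D : {in D &, injective (fun j => swap_at i (flip u j))}.
  move=> j k /andP[ji _] /andP[ki _] same; apply/eqP/negP => /negP jk.
  have := congr1 (fun x : swap n => x.1 j) same => /=.
  by rewrite !swap_at1 // flip_same flip_other //; case: (u j).
rewrite -(card_in_imset inj_D); apply/subset_leq_card/subsetP.
move=> _ /imsetP[j /andP[ji jL] ->].
rewrite inE jL andbT inE (swap_at_in ori_ok) /= !swap_at2 eqxx /=.
apply/eqP/(@eq_card1 _ j) => k; rewrite !inE.
have [->|ki] := eqVneq k i; first by rewrite [i == j]eq_sym (negbTE ji).
rewrite /= !swap_at1 //; have [->|kj] := eqVneq k j.
  by rewrite flip_same; case: (u j).
by rewrite flip_other // eqxx.
Qed.

Lemma count_unreliable i u :
  count (unreliable i u) (others i) <= 1 + #|F1 ori (swap_at i u) :&: L|.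
Proof.
have in_L : count (fun j => swap_at i (flip u j) \in L) (others i)
            <= #|F1 ori (swap_at i u) :&: L|.
  rewrite count_filter count_enum_card; apply: leq_trans (card_neighbours_in_L i u).
  by apply/subset_leq_card/subsetP => j; rewrite !inE andbC.
apply: leq_trans (leq_add (count_parent N i) in_L).
by rewrite -count_predUI; apply: leq_addr.
Qed.

Lemma count_right_votes i u :
  n.-1 - (1 + #|F1 ori (swap_at i u) :&: L|)
  <= count (pred1 (Some (pref N u i))) (votes i u).
Proof.
rewrite count_map -(size_others i) -(count_predC (unreliable i u)).
have reliable_right : count (predC (unreliable i u)) (others i)
       <= count (preim (fun j => vote_of interp (swap_at i (flip u j))
                                   (orc (swap_at i (flip u j))))
                       (pred1 (Some (pref N u i)))) (others i).
  apply: sub_count => j /=; rewrite /unreliable negb_or => /andP[pj jL].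
  by rewrite vote_honest.
by rewrite leq_subLR; apply: leq_add (count_unreliable i u) reliable_right.
Qed.

Lemma count_wrong_votes i u :
  count (pred1 (Some (~~ pref N u i))) (votes i u)
  <= 1 + #|F1 ori (swap_at i u) :&: L|.
Proof.
apply: leq_trans (count_unreliable i u).
rewrite count_map; apply: sub_count => j /=; apply: contraLR.
rewrite /unreliable negb_or => /andP[pj jL].
by rewrite vote_honest //; case: (pref N u i).
Qed.

End Robustness.

Section Oracles.
Variables (n : nat) (ori : outcome n -> 'I_n -> bool) (N : cpnet n)
  (L : {set swap n}).
Hypotheses (ori_ok : orientation_ok ori) (treeN : tree_cpnet N) (n_gt4 : 4 < n).

Lemma limited_majority :
  (forall x, in_Xswap ori x -> #|F1 ori x :&: L| <= n - 4) ->
  forall i u, majority (votes ori id (limited_oracle N L) i u) = pref N u i.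
Proof.
move=> L_small i u.
have honest x : x \notin L -> limited_oracle N L x = Some (concept N x).
  by rewrite /limited_oracle => /negbTE ->.
apply: majority_eq.
have wrong :
    count (pred1 (Some (~~ pref N u i))) (votes ori id (limited_oracle N L) i u) <= 1.
  rewrite count_map; apply: leq_trans (count_parent N i); apply: sub_count => j /=.
  apply: contraLR => pj.
  have [jL|jL] := boolP (swap_at ori i (flip u j) \in L).
    by rewrite /vote_of /limited_oracle jL.
  by rewrite (vote_honest (interp := id) treeN honest) //; case: (pref N u i).
have := count_right_votes (interp := id) ori_ok treeN honest i u.
have := L_small _ (swap_at_in ori_ok i u).
lia.
Qed.

Lemma malicious_majority :
  (forall x, in_Xswap ori x -> #|F1 ori x :&: L| <= (n - 1) %/ 2 - 2) ->
  forall i u, majority (votes ori Some (malicious_oracle N L) i u) = pref N u i.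
Proof.
move=> L_small i u.
have honest x : x \notin L -> Some (malicious_oracle N L x) = Some (concept N x).
  by rewrite /malicious_oracle => /negbTE ->.
apply: majority_eq.
have := count_wrong_votes ori_ok treeN honest i u.
have := count_right_votes ori_ok treeN honest i u.
have := L_small _ (swap_at_in ori_ok i u).
lia.
Qed.

End Oracles.

Theorem corollary4 :
  exists C : nat, forall n : nat, 4 < n ->
  forall ori : outcome n -> 'I_n -> bool, orientation_ok ori ->
  (exists a : alg n (option bool),
     forall (N : cpnet n) (L : {set swap n}),
       tree_cpnet N ->
       {subset L <= in_Xswap ori} ->
       (forall x, in_Xswap ori x -> #|F1 ori x :&: L| <= n - 4) ->
       learns ori a (limited_oracle N L) N
         (C * (n ^ 2 + nedges N * n * up_log 2 n)))
  /\
  (exists a : alg n bool,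
     forall (N : cpnet n) (L : {set swap n}),
       tree_cpnet N ->
       {subset L <= in_Xswap ori} ->
       (forall x, in_Xswap ori x -> #|F1 ori x :&: L| <= (n - 1) %/ 2 - 2) ->
       learns ori a (malicious_oracle N L) N
         (C * (n ^ 2 + nedges N * n * up_log 2 n))).
Proof.
exists 2 => n n_gt4 ori ori_ok; split.
  exists (learner ori id) => N L treeN _ L_small.
  exact/learner_learns/limited_majority.
exists (learner ori Some) => N L treeN _ L_small.
exact/learner_learns/malicious_majority.
Qed.
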